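(* Let $A:\Omega^+\to\mathbb{R}$ be Lipschitz, $W$ a Lipschitz involution kernel for $A$ with associated $A^-:\Omega^-\to\mathbb{R}$. Let $\mu$ be any equilibrium probability on $\Omega^+$, $\hat\mu$ its unique $\hat\sigma$-invariant extension to $\hat\Omega$ and $\mu^-$ the marginal of $\hat\mu$ on $\Omega^-$. Then \[(1)\ \int A\,d\mu=\int A^-\,d\mu^-,\qquad (2)\ \int A^-\circ\theta^{-1}\,d\mu=\int A\circ\theta\,d\mu^-.\]
   Context: $(M,d)$ is a compact metric space; $\Omega^+=M^{\mathbb{N}}$ with points $x=|x_1,x_2,\dots)$, $\Omega^-=M^{\mathbb{N}}$ with points $y=(\dots,y_2,y_1|$; $\hat\Omega=\Omega^-\times\Omega^+$ with $\hat\sigma(\dots,y_2,y_1|x_1,x_2,\dots)=(\dots,y_2,y_1,x_1|x_2,\dots)$. $\theta:\Omega^-\to\Omega^+$, $\theta(\dots,z_2,z_1|)=|z_1,z_2,\dots)$. A shift-invariant probability $\mu$ on $\Omega^+$ is an equilibrium probability if there exist a Borel probability $\nu$ on $M$ with $\operatorname{supp}\nu=M$ and a Lipschitz $B:\Omega^+\to\mathbb{R}$ with $\int e^{B(|a,x_1,x_2,\dots))}d\nu(a)=1$ for all $x$ such that $\int\!\int e^{B(|a,x))}f(|a,x))\,d\nu(a)\,d\mu(x)=\int f\,d\mu$ for all continuous $f$. Its $\hat\sigma$-invariant extension is the unique $\hat\sigma$-invariant probability on $\hat\Omega$ with marginal $\mu$ on $\Omega^+$. A Lipschitz $W:\hat\Omega\to\mathbb{R}$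 is an involution kernel for $A$ if $A^-:=A\circ\hat\sigma^{-1}+W\circ\hat\sigma^{-1}-W$ does not depend on $x$, i.e. $A^-(y)=A(|y_1,x_1,x_2,\dots))+W(\dots,y_3,y_2|y_1,x_1,\dots)-W(\dots,y_2,y_1|x_1,\dots)$; $A^-$ is viewed as a function on $\Omega^-$. *)

From HB Require Import structures.
From mathcomp Require Import all_boot all_order all_algebra.
From mathcomp Require Import all_classical all_reals all_analysis.
Set Implicit Arguments. Unset Strict Implicit. Unset Printing Implicit Defensive.
Import Order.TTheory GRing.Theory Num.Theory.
Local Open Scope classical_set_scope.
Local Open Scope ring_scope.

Section Defs.
Variables (R : realType) (M : pointedType) (d : M -> M -> R).

Definition is_metric (T : Type) (dist : T -> T -> R) : Prop :=
  [/\ forall x y, 0 <= dist x y,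
      forall x y, dist x y = 0 <-> x = y,
      forall x y, dist x y = dist y x &
      forall x y z, dist x z <= dist x y + dist y z].

Definition seq_compact : Prop :=
  forall u : nat -> M, exists phi : nat -> nat,
    (forall n, (phi n < phi n.+1)%N) /\
    exists l : M, (fun n => d (u (phi n)) l) @ \oo --> 0.

Definition dopen (T : Type) (dist : T -> T -> R) : set (set T) :=
  fun U => forall x, U x -> exists2 e : R, 0 < e & forall y, dist x y < e -> U y.

Definition dball (T : Type) (dist : T -> T -> R) (x : T) (e : R) : set T :=
  fun y => dist x y < e.

(* sequences x = |x_1,x_2,...) are encoded as x : nat -> M with x_{n+1} = x n;
   likewise y = (...,y_2,y_1| is encoded as y : nat -> M with y_{n+1} = y n. *)
Definition seqdist (x y : nat -> M) : R :=
  limn (fun N => \sum_(0 <= n < N) (d (x n) (y n) / 2 ^+ n.+1)).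

Definition OmegaP := g_sigma_algebraType (dopen seqdist).
Definition OmegaM := g_sigma_algebraType (dopen seqdist).
Definition MB := g_sigma_algebraType (dopen d).

Definition OmegaHat := (OmegaM * OmegaP)%type.

Definition hatdist (p q : OmegaHat) : R := seqdist p.1 q.1 + seqdist p.2 q.2.

Definition scons (a : M) (x : nat -> M) : nat -> M :=
  fun n => if n is k.+1 then x k else a.
Definition stail (x : nat -> M) : nat -> M := fun n => x n.+1.

Definition sigmaP (x : OmegaP) : OmegaP := stail x.

(* hat sigma (..,y2,y1|x1,x2,..) = (..,y2,y1,x1|x2,..) *)
Definition sigmaHat (p : OmegaHat) : OmegaHat := (scons (p.2 0%N) p.1, stail p.2).
(* its inverse (..,y2,y1|x1,..) = (..,y3,y2|y1,x1,..) *)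
Definition sigmaHatInv (p : OmegaHat) : OmegaHat := (stail p.1, scons (p.1 0%N) p.2).

(* theta (..,z2,z1|) = |z1,z2,..) : identity on the encodings *)
Definition theta (y : OmegaM) : OmegaP := y.
Definition thetaInv (x : OmegaP) : OmegaM := x.

Definition dlipschitz (T : Type) (dist : T -> T -> R) (f : T -> R) : Prop :=
  exists K : R, forall x y, `|f x - f y| <= K * dist x y.

Definition dcontinuous (T : Type) (dist : T -> T -> R) (f : T -> R) : Prop :=
  forall x (e : R), 0 < e -> exists2 delta : R, 0 < delta &
    forall y, dist x y < delta -> `|f x - f y| < e.

Definition shift_invariant (mu : probability OmegaP R) : Prop :=
  forall B : set OmegaP, measurable B -> mu (sigmaP @^-1` B) = mu B.

Definition full_support (nu : probability MB R) : Prop :=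
  forall (x : MB) (e : R), 0 < e -> (0 < nu (dball d x e))%E.

Definition equilibrium (mu : probability OmegaP R) : Prop :=
  shift_invariant mu /\
  exists (nu : probability MB R) (B : OmegaP -> R),
    [/\ full_support nu, dlipschitz seqdist B,
        (forall x : OmegaP, (\int[nu]_a (expR (B (scons a x)))%:E = 1)%E) &
        forall f : OmegaP -> R, dcontinuous seqdist f ->
          (\int[mu]_x (\int[nu]_a ((expR (B (scons a x)) * f (scons a x))%:E))
          = \int[mu]_x (f x)%:E)%E].

Definition involution_kernel (A : OmegaP -> R) (W : OmegaHat -> R)
    (Am : OmegaM -> R) : Prop :=
  forall (y : OmegaM) (x : OmegaP),
    Am y = A (scons (y 0%N) x) + W (stail y, scons (y 0%N) x) - W (y, x).

Definition hat_invariant (muh : probability OmegaHat R) : Prop :=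
  forall E : set OmegaHat, measurable E -> muh (sigmaHat @^-1` E) = muh E.

Definition marginalP (muh : probability OmegaHat R) (mu : probability OmegaP R) :=
  forall B : set OmegaP, measurable B -> muh (setT `*` B) = mu B.

Definition marginalM (muh : probability OmegaHat R) (mum : probability OmegaM R) :=
  forall B : set OmegaM, measurable B -> muh (B `*` setT) = mum B.

End Defs.

(* For p = (y|x) the involution kernel equation reads
     A^-(pi^- (sigmaHat p)) + W (sigmaHat p) = A (pi^+ p) + W p,
   and, exchanging the roles of the two half-sequences, with
   W'(y|x) := W (thetaInv x | theta y),
     A (theta (pi^- (sigmaHat p))) + W'(sigmaHat p) = A^-(thetaInv (pi^+ p)) + W' p.
   So the two sides of each identity are cohomologous over sigmaHat; integrating
   against the sigmaHat-invariant muh cancels the coboundaries, and the marginals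
   turn integrals over Omega-hat of functions of one half-sequence into integrals
   against mu and mu^-.
   Compactness of M provides the integrability and measurability: it bounds d,
   so Lipschitz functions are bounded, and it makes M separable, so cylinders
   form a countable base of Omega^+ and the product sigma-algebra of Omega-hat
   contains its open sets. *)

From HB Require Import structures.
From mathcomp Require Import all_boot all_order all_algebra.
From mathcomp Require Import all_classical all_reals all_analysis.
From mathcomp Require Import ring lra measurable_realfun.
Set Implicit Arguments. Unset Strict Implicit. Unset Printing Implicit Defensive.
Import Order.TTheory GRing.Theory Num.Theory numFieldNormedType.Exports.
Local Open Scope classical_set_scope.
Local Open Scope ring_scope.

Lemma sum_inv_pow2 (R : realType) m N : (m <= N)%N ->
  \sum_(m <= n < N) (2 ^+ n.+1 : R)^-1 = (2 ^+ m)^-1 - (2 ^+ N)^-1.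
Proof.
move=> mN; rewrite -opprB -(telescope_sumr (fun n => (2 ^+ n : R)^-1) mN).
rewrite -sumrN; apply: eq_bigr => n _; rewrite exprS invfM.
have : (2 ^+ n : R)^-1 != 0 by rewrite invr_eq0 expf_neq0.
set u := (2 ^+ n : R)^-1 => _; lra.
Qed.

Lemma exists_pow2_gt (R : realType) (C : R) : exists k, C < 2 ^+ k.
Proof.
exists (Num.truncn C).+1; apply: (lt_le_trans (truncnS_gt C)).
by rewrite -natrX ler_nat ltnW // ltn_expl.
Qed.

Lemma dlipschitz_ge0 (R : realType) (T : Type) (dist : T -> T -> R) (f : T -> R) :
  (forall x y, 0 <= dist x y) -> dlipschitz dist f ->
  exists2 K, 0 <= K & forall x y, `|f x - f y| <= K * dist x y.
Proof.
move=> dist_ge0 [K f_lip]; exists `|K| => // x y.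
by apply: le_trans (f_lip x y) _; rewrite ler_wpM2r ?ler_norm.
Qed.

Section Lipschitz.
Variables (R : realType) (T : Type) (dist : T -> T -> R).
Hypothesis dist_ge0 : forall x y, 0 <= dist x y.

Lemma dlipschitzD (f g : T -> R) :
  dlipschitz dist f -> dlipschitz dist g -> dlipschitz dist (f \+ g).
Proof.
move=> [Kf f_lip] [Kg g_lip]; exists (Kf + Kg) => x y /=.
rewrite opprD addrACA mulrDl; apply: le_trans (ler_normD _ _) _.
exact: lerD.
Qed.

Lemma dlipschitzN (f : T -> R) : dlipschitz dist f -> dlipschitz dist (\- f).
Proof. by move=> [K f_lip]; exists K => x y /=; rewrite -opprD normrN. Qed.

Lemma dlipschitz_comp (S : Type) (distS : S -> S -> R) (f : T -> S) (g : S -> R) C :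
  0 <= C -> (forall x y, distS (f x) (f y) <= C * dist x y) ->
  (forall u v, 0 <= distS u v) -> dlipschitz distS g -> dlipschitz dist (g \o f).
Proof.
move=> C0 f_lip distS_ge0 /(dlipschitz_ge0 distS_ge0)[K K0 g_lip].
exists (K * C) => x y /=; apply: le_trans (g_lip _ _) _.
by rewrite -mulrA ler_wpM2l.
Qed.

Lemma dlipschitz_bounded (t0 : T) C (f : T -> R) : (forall x y, dist x y <= C) ->
  dlipschitz dist f -> [bounded f x | x in setT].
Proof.
move=> dist_le /(dlipschitz_ge0 dist_ge0)[K K0 f_lip].
rewrite /bounded_near; near=> B => x _ /=.
have f_le : `|f x| <= `|f t0| + K * C.
  have := ler_normD (f x - f t0) (f t0); rewrite subrK.
  have : K * dist x t0 <= K * C by rewrite ler_wpM2l.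
  have := f_lip x t0; lra.
apply: le_trans f_le _; near: B; apply: nbhs_pinfty_ge; exact: num_real.
Unshelve. all: by end_near. Qed.

Lemma dopen_preimage (S : Type) (distS : S -> S -> R) (f : T -> S) K (U : set S) :
  0 <= K -> (forall x y, distS (f x) (f y) <= K * dist x y) ->
  dopen distS U -> dopen dist (f @^-1` U).
Proof.
move=> K0 f_lip U_open x /U_open[e e0 ballU].
have K1 : 0 < K + 1 by rewrite ltr_wpDl.
exists (e / (K + 1)); first by rewrite divr_gt0.
move=> y; rewrite ltr_pdivlMr // => dist_lt; apply: ballU.
apply: le_lt_trans (f_lip x y) (le_lt_trans _ dist_lt).
by rewrite mulrDr mulr1 mulrC lerDl.
Qed.

Lemma dopen_itv (a b : R) : dopen (fun u v : R => `|u - v|) `]a, b[%classic.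
Proof.
move=> u; rewrite /= in_itv /= => /andP[au ub].
exists (Num.min (u - a) (b - u)); first by rewrite lt_min !subr_gt0 au ub.
move=> v; rewrite lt_min /= in_itv /= => /andP[ua bu].
have := ler_norm (u - v); have := ler_norm (v - u); rewrite distrC => le_vu le_uv.
by apply/andP; split; lra.
Qed.

End Lipschitz.

Section LipschitzMeasurable.
Context d (X : measurableType d) (R : realType) (dist : X -> X -> R).
Hypothesis dist_ge0 : forall x y, 0 <= dist x y.
Hypothesis dopen_measurable : forall U : set X, dopen dist U -> measurable U.

Lemma measurable_fun_dlipschitz (f : X -> R) :
  dlipschitz dist f -> measurable_fun setT f.
Proof.
move=> /(dlipschitz_ge0 dist_ge0)[K K0 f_lip].
apply: (measurability _ (RGenOpens.measurableE R)) => _ [_ [a [b ->]] <-].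
rewrite setTI; apply: dopen_measurable.
(* [measurability] sees [f] as landing in [g_sigma_algebraType ocitv], so the
   preimage matches the one of [dopen_preimage] only up to conversion. *)
exact (dopen_preimage dist_ge0 (distS := fun u v => `|u - v|) K0 f_lip (@dopen_itv R a b)).
Qed.

Lemma measurable_fun_dlipschitz_to (S : pointedType) (distS : S -> S -> R)
    (f : X -> g_sigma_algebraType (dopen distS)) K :
  0 <= K -> (forall x y, distS (f x) (f y) <= K * dist x y) -> measurable_fun setT f.
Proof.
move=> K0 f_lip.
apply: (@measurability _ _ X (g_sigma_algebraType (dopen distS)) setT f (dopen distS)) => //.
move=> _ [U U_open <-].
by rewrite setTI; apply/dopen_measurable/(dopen_preimage dist_ge0 K0 f_lip).
Qed.

End LipschitzMeasurable.

Section ProbabilityIntegrals.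
Context d (X : measurableType d) (R : realType) (P : probability X R).

Lemma bounded_integrable (f : X -> R) : measurable_fun setT f ->
  [bounded f x | x in setT] -> P.-integrable setT (EFin \o f).
Proof.
apply: measurable_bounded_integrable => //.
by rewrite (le_lt_trans (probability_le1 P measurableT)) ?ltry.
Qed.

Lemma integral_measure_preserving d' (Y : measurableType d') (Q : probability Y R)
    (phi : X -> Y) (f : Y -> R) :
  measurable_fun setT phi -> (forall B, measurable B -> P (phi @^-1` B) = Q B) ->
  measurable_fun setT f -> [bounded f y | y in setT] ->
  (\int[Q]_y (f y)%:E = \int[P]_x (f (phi x))%:E)%E.
Proof.
move=> mphi phiPQ mf f_bd.
rewrite (eq_measure_integral (pushforward P phi)); last by move=> B mB _; exact/esym/phiPQ.
rewrite integral_pushforward // ?preimage_setT; first exact/measurable_EFinP.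
apply: bounded_integrable; first exact: measurableT_comp.
by case: f_bd => B0 [B0_real f_le]; exists B0; split => // B B0B x _; exact: f_le.
Qed.

Lemma integral_cohomologous (T : X -> X) (f g h : X -> R) :
  measurable_fun setT T -> (forall E, measurable E -> P (T @^-1` E) = P E) ->
  measurable_fun setT f -> [bounded f x | x in setT] ->
  measurable_fun setT g -> [bounded g x | x in setT] ->
  measurable_fun setT h -> [bounded h x | x in setT] ->
  (forall x, f (T x) + h (T x) = g x + h x) ->
  (\int[P]_x (f x)%:E = \int[P]_x (g x)%:E)%E.
Proof.
move=> mT T_inv mf f_bd mg g_bd mh h_bd cohom.
have intD (u v : X -> R) : measurable_fun setT u -> [bounded u x | x in setT] ->
    measurable_fun setT v -> [bounded v x | x in setT] ->
    (\int[P]_x (u x + v x)%:E = \int[P]_x (u x)%:E + \int[P]_x (v x)%:E)%E.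
  move=> mu' u_bd mv v_bd; under eq_integral do rewrite EFinD.
  by rewrite integralD //; apply: bounded_integrable.
have mfh : measurable_fun setT (f \+ h) by exact: measurable_funD.
have invariance : (\int[P]_x (f x + h x)%:E = \int[P]_x (g x + h x)%:E)%E.
  rewrite (integral_measure_preserving mT T_inv mfh (bounded_funD f_bd h_bd)).
  by apply: eq_integral => x _; rewrite /= cohom.
move: invariance; rewrite !intD // => /(congr1 (fun z => z - \int[P]_x (h x)%:E)%E).
by rewrite !addeK // integrable_fin_num // bounded_integrable.
Qed.

End ProbabilityIntegrals.

Section SequenceSpace.
Variables (R : realType) (M : pointedType) (d : M -> M -> R).
Hypothesis d_metric : is_metric d.

Lemma d_ge0 a b : 0 <= d a b. Proof. by case: d_metric. Qed.
Lemma dC a b : d a b = d b a. Proof. by case: d_metric. Qed.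
Lemma d_triangle a b c : d a c <= d a b + d b c. Proof. by case: d_metric. Qed.
Lemma dxx a : d a a = 0. Proof. by case: d_metric => _ /(_ a a) [_ ->]. Qed.

Hypothesis M_compact : seq_compact d.

Lemma seq_compact_close_pair (u : nat -> M) r :
  0 < r -> exists m n, (m < n)%N /\ d (u n) (u m) < r.
Proof.
move=> r0; have [phi [phi_incr [l ul]]] := M_compact u.
have [N _ near_l] := cvgr_dist_lt _ _ ul _ (divr_gt0 r0 (ltr0Sn _ 1)).
exists (phi N), (phi N.+1); split; first exact: phi_incr.
have := near_l N (leqnn N); have := near_l N.+1 (leqnSn N).
rewrite /= !sub0r !normrN !ger0_norm ?d_ge0 // => dist1 dist0.
apply: le_lt_trans (d_triangle _ l _) _; rewrite (dC l) [r]splitr.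
exact: ltrD.
Qed.

Lemma finite_net r : 0 < r ->
  exists s : seq M, forall a, exists2 i, (i < size s)%N & d a (nth point s i) < r.
Proof.
(* Otherwise choosing greedily points [r]-far from all previous ones yields a
   sequence with no two terms [r]-close. *)
move=> r0; apply: contrapT => no_net.
have far s : exists a, forall i, (i < size s)%N -> r <= d a (nth point s i).
  apply: contrapT => all_near; apply: no_net; exists s => a.
  apply: contrapT => a_far; apply: all_near; exists a => i i_lt.
  by rewrite leNgt; apply/negP => lt_r; apply: a_far; exists i.
have [g g_far] := choice far.
pose pts n := iter n (fun s => rcons s (g s)) [::].
have size_pts n : size (pts n) = n by elim: n => //= n IH; rewrite size_rcons IH.
have nth_pts n i : (i < n)%N -> nth point (pts n) i = g (pts i).
  elim: n => // n IH; rewrite ltnS leq_eqVlt => /orP[/eqP ->|i_lt].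
    by rewrite /= nth_rcons size_pts ltnn eqxx.
  by rewrite /= nth_rcons size_pts i_lt IH.
have [m [n [mn close]]] := seq_compact_close_pair (fun n => g (pts n)) r0.
have := g_far (pts n) m; rewrite size_pts (nth_pts _ _ mn) => /(_ mn).
by rewrite leNgt close.
Qed.

Lemma d_bounded : exists D, forall a b, d a b <= D.
Proof.
have [s s_net] := finite_net ltr01.
pose S := \sum_(i < size s) d (nth point s i) point.
have le_S i : (i < size s)%N -> d (nth point s i) point <= S.
  move=> i_lt; rewrite /S (bigD1 (Ordinal i_lt)) //= lerDl.
  by apply: sumr_ge0 => j _; exact: d_ge0.
exists (2 + 2 * S) => a b.
have [i i_lt ai] := s_net a; have [j j_lt bj] := s_net b.
have := d_triangle a (nth point s i) b; have := d_triangle (nth point s i) point b.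
have : d point b <= d (nth point s j) point + d (nth point s j) b.
  by rewrite (dC _ point); exact: d_triangle.
rewrite dC in bj; have := le_S i i_lt; have := le_S j j_lt; lra.
Qed.

Variable D : R.
Hypothesis d_le : forall a b, d a b <= D.

Lemma bound_ge0 : 0 <= D. Proof. exact: le_trans (d_ge0 point point) (d_le _ _). Qed.

Local Notation psum x y := (fun N => \sum_(0 <= n < N) (d (x n) (y n) / 2 ^+ n.+1)).

Lemma psum_nondecreasing x y : nondecreasing_seq (psum x y).
Proof.
apply: (@nondecreasing_series _ (fun n => d (x n) (y n) / 2 ^+ n.+1) xpredT) => n _ _.
by rewrite divr_ge0 ?d_ge0 ?exprn_ge0.
Qed.

Lemma psum_le_cylinder x y e k N : 0 <= e ->
  (forall j, (j < k)%N -> d (x j) (y j) <= e) -> psum x y N <= e + D / 2 ^+ k.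
Proof.
move=> e0 xy_le; have /= le_maxn := @psum_nondecreasing x y _ _ (leq_maxl N k).
apply: le_trans le_maxn _; rewrite (@big_cat_nat _ _ _ k) ?leq_maxr //; apply: lerD.
  apply: (@le_trans _ _ (e * \sum_(0 <= n < k) (2 ^+ n.+1)^-1)).
    rewrite mulr_sumr; apply: ler_sum_nat => n /andP[_ nk].
    by rewrite ler_wpM2r ?invr_ge0 ?exprn_ge0 ?xy_le.
  rewrite sum_inv_pow2 // expr0 invr1 ler_piMr // gerBl invr_ge0 exprn_ge0 //.
apply: (@le_trans _ _ (D * \sum_(k <= n < maxn N k) (2 ^+ n.+1)^-1)).
  rewrite mulr_sumr; apply: ler_sum_nat => n _.
  by rewrite ler_wpM2r ?invr_ge0 ?exprn_ge0 ?d_le.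
by rewrite sum_inv_pow2 ?leq_maxr // ler_wpM2l ?bound_ge0 // gerBl invr_ge0 exprn_ge0.
Qed.

Lemma psum_cvg x y : cvgn (psum x y).
Proof.
apply: nondecreasing_is_cvgn; first exact: psum_nondecreasing.
exists (0 + D / 2 ^+ 0) => _ [N _ <-]; exact: psum_le_cylinder.
Qed.

Lemma psum_le_seqdist x y N : psum x y N <= seqdist d x y.
Proof. exact: (nondecreasing_cvgn_le (@psum_nondecreasing x y) (@psum_cvg x y)). Qed.

Lemma seqdist_le_of x y B : (forall N, psum x y N <= B) -> seqdist d x y <= B.
Proof.
by move=> le_B; apply: limr_le (@psum_cvg x y) _; near=> N; exact: le_B.
Unshelve. all: by end_near. Qed.

Lemma seqdist_ge0 x y : 0 <= seqdist d x y.
Proof. by apply: le_trans (@psum_le_seqdist x y 0); rewrite /= big_geq. Qed.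

Lemma seqdist_le_cylinder x y e k : 0 <= e ->
  (forall j, (j < k)%N -> d (x j) (y j) <= e) -> seqdist d x y <= e + D / 2 ^+ k.
Proof. by move=> e0 xy_le; apply: seqdist_le_of => N; exact: psum_le_cylinder. Qed.

Lemma seqdist_le_bound x y : seqdist d x y <= D.
Proof.
have := @seqdist_le_cylinder x y 0 0 (lexx 0); rewrite expr0 divr1 add0r.
by apply => j; rewrite ltn0.
Qed.

Lemma seqdist_xx x : seqdist d x x = 0.
Proof.
apply/eqP; rewrite eq_le seqdist_ge0 andbT; apply: seqdist_le_of => N.
by rewrite big1 // => n _; rewrite dxx mul0r.
Qed.

Lemma d_le_seqdist x y j : d (x j) (y j) <= 2 ^+ j.+1 * seqdist d x y.
Proof.
rewrite -ler_pdivrMl ?exprn_gt0 // mulrC; apply: le_trans (@psum_le_seqdist x y j.+1).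
rewrite /= big_nat_recr //= lerDr; apply: sumr_ge0 => n _.
by rewrite divr_ge0 ?d_ge0 ?exprn_ge0.
Qed.

Lemma seqdist_scons a b x y :
  seqdist d (scons a x) (scons b y) <= d a b + seqdist d x y.
Proof.
apply: seqdist_le_of => -[|N]; first by rewrite /= big_geq // addr_ge0 ?d_ge0 ?seqdist_ge0.
rewrite /= big_nat_recl //=; apply: lerD.
  by rewrite ler_pdivrMr ?exprn_gt0 // ler_peMr ?d_ge0 // expr1 ler1n.
apply: le_trans (@psum_le_seqdist x y N); apply: ler_sum_nat => n _.
by rewrite ler_wpM2l ?d_ge0 // lef_pV2 ?posrE ?exprn_gt0 // ler_eXn2l ?ltr1n.
Qed.

Lemma seqdist_stail x y : seqdist d (stail x) (stail y) <= 2 * seqdist d x y.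
Proof.
apply: seqdist_le_of => N; apply: le_trans (ler_wpM2l _ (@psum_le_seqdist x y N.+1)) => //.
rewrite /= big_nat_recl // mulrDr mulr_sumr.
rewrite [X in _ <= _ + X](eq_bigr (fun n => d (stail x n) (stail y n) / 2 ^+ n.+1)).
  by rewrite lerDr mulr_ge0 ?divr_ge0 ?d_ge0 ?exprn_ge0.
by move=> n _; rewrite (exprS _ n.+1); field; rewrite expf_neq0.
Qed.

Lemma dopen_coord_ball j c r : dopen (seqdist d) [set x | d (x j) c < r].
Proof.
move=> x /= xj; exists ((r - d (x j) c) / 2 ^+ j.+1).
  by rewrite divr_gt0 ?exprn_gt0 // subr_gt0.
move=> y; rewrite ltr_pdivlMr ?exprn_gt0 // => xy.
apply: le_lt_trans (d_triangle _ (x j) _) _; rewrite (dC (y j)).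
have := d_le_seqdist x y j; lra.
Qed.

Lemma dopen_seqdist_measurable (U : set (OmegaP d)) : dopen (seqdist d) U -> measurable U.
Proof. exact: sub_sigma_algebra. Qed.

Lemma seqdist_countable_base : exists C : nat * seq nat -> set (OmegaP d),
  (forall c, measurable (C c)) /\
  forall x e, 0 < e -> exists c, C c x /\ forall y, C c y -> seqdist d x y < e.
Proof.
have nets k : exists s : seq M,
    forall a, exists2 i, (i < size s)%N & d a (nth point s i) < (2 ^+ k)^-1.
  by apply: finite_net; rewrite invr_gt0 exprn_gt0.
have [net netP] := choice nets.
have ctr_ex k a : exists i, d a (nth point (net k) i) < (2 ^+ k)^-1.
  by have [i _ ai] := netP k a; exists i.
have ctr_k k :
    exists c : M -> nat, forall a, d a (nth point (net k) (c a)) < (2 ^+ k)^-1.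
  by have [c cP] := choice (ctr_ex k); exists c.
have [ctr ctrP] := choice ctr_k.
pose C (c : nat * seq nat) : set (OmegaP d) :=
  \bigcap_(j in [set j | (j < c.1)%N])
    [set y | d (y j) (nth point (net c.1) (nth 0%N c.2 j)) < (2 ^+ c.1)^-1].
exists C; split=> [c|x e e0].
  apply: bigcap_measurableType => j _.
  by apply: dopen_seqdist_measurable; exact: dopen_coord_ball.
have [k k_gt] := exists_pow2_gt ((2 + D) / e).
have nth_ctr j : (j < k)%N ->
    nth 0%N [seq ctr k (x i) | i <- iota 0 k] j = ctr k (x j).
  by move=> jk; rewrite (nth_map 0%N) ?size_iota // nth_iota.
exists (k, [seq ctr k (x i) | i <- iota 0 k]); split=> [j /= jk|y y_in].
  by rewrite nth_ctr //; exact: ctrP.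
have two_k : 0 <= 2 * (2 ^+ k)^-1 :> R by rewrite mulr_ge0 ?invr_ge0 ?exprn_ge0.
apply: le_lt_trans (seqdist_le_cylinder two_k _) _ => [j jk|].
  have := y_in j jk; rewrite /= nth_ctr // => yj; have := ctrP k (x j).
  have := d_triangle (x j) (nth point (net k) (ctr k (x j))) (y j).
  rewrite (dC (nth _ _ _) (y j)); lra.
rewrite ltr_pdivrMr // in k_gt.
rewrite /= -mulrDl ltr_pdivrMr ?exprn_gt0 // mulrC; lra.
Qed.

Lemma hatdist_ge0 (p q : OmegaHat d) : 0 <= hatdist p q.
Proof. by rewrite addr_ge0 ?seqdist_ge0. Qed.

Lemma hatdist_le (p q : OmegaHat d) : hatdist p q <= D + D.
Proof. by rewrite lerD ?seqdist_le_bound. Qed.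

Lemma dopen_hatdist_measurable (U : set (OmegaHat d)) :
  dopen (@hatdist R M d) U -> measurable U.
Proof.
move=> U_open; have [C [mC C_base]] := seqdist_countable_base.
have -> : U = \bigcup_(c in [set c | C c.1 `*` C c.2 `<=` U]) (C c.1 `*` C c.2).
  apply/seteqP; split=> [p Up|p [c /= CU Cp]]; last exact: CU.
  have [e e0 ballU] := U_open p Up.
  have e2 : 0 < e / 2 by rewrite divr_gt0.
  have [c1 [Cp1 near1]] := C_base p.1 _ e2; have [c2 [Cp2 near2]] := C_base p.2 _ e2.
  exists (c1, c2) => //= q [/near1 q1 /near2 q2]; apply: ballU.
  by rewrite /hatdist [e]splitr ltrD.
rewrite bigcup_mkcond; apply: countable_bigcupT_measurable => [|c].
  exact: countableP.
by case: ifPn => _; [exact: measurableX|exact: measurable0].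
Qed.

Lemma measurable_sigmaHat : measurable_fun setT (@sigmaHat R M d).
Proof.
apply/measurable_fun_pairP; split;
  apply: (measurable_fun_dlipschitz_to hatdist_ge0 dopen_hatdist_measurable (K := 2))
    => // p q /=.
- apply: le_trans (seqdist_scons _ _ _ _) _.
  have := d_le_seqdist p.2 q.2 0; rewrite expr1.
  have := seqdist_ge0 p.1 q.1; rewrite /hatdist; lra.
- apply: le_trans (seqdist_stail _ _) _.
  have := seqdist_ge0 p.1 q.1; rewrite /hatdist; lra.
Qed.

Lemma measurable_fun_seqdist_dlipschitz (g : OmegaP d -> R) :
  dlipschitz (seqdist d) g -> measurable_fun setT g.
Proof.
exact: (@measurable_fun_dlipschitz _ (OmegaP d) _ _ seqdist_ge0 dopen_seqdist_measurable).
Qed.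

Lemma bounded_seqdist_dlipschitz (g : OmegaP d -> R) :
  dlipschitz (seqdist d) g -> [bounded g x | x in setT].
Proof. exact: (dlipschitz_bounded seqdist_ge0 (fun=> point) seqdist_le_bound). Qed.

Lemma measurable_fun_hatdist_dlipschitz (g : OmegaHat d -> R) :
  dlipschitz (@hatdist R M d) g -> measurable_fun setT g.
Proof. exact: (measurable_fun_dlipschitz hatdist_ge0 dopen_hatdist_measurable). Qed.

Lemma bounded_hatdist_dlipschitz (g : OmegaHat d -> R) :
  dlipschitz (@hatdist R M d) g -> [bounded g x | x in setT].
Proof. exact: (dlipschitz_bounded hatdist_ge0 (fun=> point, fun=> point) hatdist_le). Qed.

Lemma dlipschitz_fst (g : OmegaM d -> R) :
  dlipschitz (seqdist d) g -> dlipschitz (@hatdist R M d) (fun p => g p.1).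
Proof.
apply: (dlipschitz_comp (C := 1)) seqdist_ge0 => // p q.
by rewrite mul1r lerDl seqdist_ge0.
Qed.

Lemma dlipschitz_snd (g : OmegaP d -> R) :
  dlipschitz (seqdist d) g -> dlipschitz (@hatdist R M d) (fun p => g p.2).
Proof.
apply: (dlipschitz_comp (C := 1)) seqdist_ge0 => // p q.
by rewrite mul1r lerDr seqdist_ge0.
Qed.

Lemma dlipschitz_swap (g : OmegaHat d -> R) :
  dlipschitz (@hatdist R M d) g -> dlipschitz (@hatdist R M d) (fun p => g (p.2, p.1)).
Proof.
apply: (dlipschitz_comp (C := 1)) hatdist_ge0 => // p q.
by rewrite mul1r /hatdist addrC.
Qed.

Lemma dlipschitz_involution_kernel A W Am :
  dlipschitz (seqdist d) A -> dlipschitz (@hatdist R M d) W ->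
  involution_kernel A W Am -> dlipschitz (seqdist d) Am.
Proof.
move=> A_lip W_lip W_kernel; pose x0 : nat -> M := fun=> point.
have -> : Am = (A \o (fun y => scons (y 0%N) x0))
    \+ (W \o (fun y => (stail y, scons (y 0%N) x0))) \+ \- (W \o (fun y => (y, x0))).
  by apply/funext => y; rewrite (W_kernel y x0).
have scons_lip y y' :
    seqdist d (scons (y 0%N) x0) (scons (y' 0%N) x0) <= 2 * seqdist d y y'.
  apply: le_trans (seqdist_scons _ _ _ _) _; rewrite seqdist_xx addr0.
  by have := d_le_seqdist y y' 0; rewrite expr1.
apply: dlipschitzD; [apply: dlipschitzD|apply: dlipschitzN].
- exact: (dlipschitz_comp (C := 2)) seqdist_ge0 A_lip.
- apply: (dlipschitz_comp (C := 4)) hatdist_ge0 W_lip => // y y'.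
  have := scons_lip y y'; have := seqdist_stail y y'; rewrite /hatdist /=; lra.
- apply: (dlipschitz_comp (C := 1)) hatdist_ge0 W_lip => // y y'.
  by rewrite /hatdist /= seqdist_xx addr0 mul1r.
Qed.

Lemma integral_marginalP muh (mu : probability (OmegaP d) R) (g : OmegaP d -> R) :
  marginalP muh mu -> dlipschitz (seqdist d) g ->
  (\int[mu]_x (g x)%:E = \int[muh]_p (g p.2)%:E)%E.
Proof.
move=> muh_marg g_lip; apply: integral_measure_preserving measurable_snd _ _ _.
- move=> B mB; rewrite -muh_marg //; congr (muh _).
  by apply/seteqP; split=> [p Bp|p []].
- exact: measurable_fun_seqdist_dlipschitz.
- exact: bounded_seqdist_dlipschitz.
Qed.

Lemma integral_marginalM muh (mum : probability (OmegaM d) R) (g : OmegaM d -> R) :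
  marginalM muh mum -> dlipschitz (seqdist d) g ->
  (\int[mum]_y (g y)%:E = \int[muh]_p (g p.1)%:E)%E.
Proof.
move=> muh_marg g_lip; apply: integral_measure_preserving measurable_fst _ _ _.
- move=> B mB; rewrite -muh_marg //; congr (muh _).
  by apply/seteqP; split=> [p Bp|p []].
- exact: measurable_fun_seqdist_dlipschitz.
- exact: bounded_seqdist_dlipschitz.
Qed.

Lemma integral_sigmaHat_cohomologous muh (f g h : OmegaHat d -> R) :
  hat_invariant muh -> dlipschitz (@hatdist R M d) f ->
  dlipschitz (@hatdist R M d) g -> dlipschitz (@hatdist R M d) h ->
  (forall p, f (sigmaHat p) + h (sigmaHat p) = g p + h p) ->
  (\int[muh]_p (f p)%:E = \int[muh]_p (g p)%:E)%E.
Proof.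
move=> muh_inv f_lip g_lip h_lip.
apply: integral_cohomologous measurable_sigmaHat muh_inv _ _ _ _ _ _;
  by [apply: measurable_fun_hatdist_dlipschitz|apply: bounded_hatdist_dlipschitz].
Qed.

End SequenceSpace.

Lemma involution_kernel_sigmaHat (R : realType) (M : pointedType) (d : M -> M -> R)
    (A : OmegaP d -> R) (W : OmegaHat d -> R) (Am : OmegaM d -> R) (p : OmegaHat d) :
  involution_kernel A W Am -> Am (sigmaHat p).1 + W (sigmaHat p) = A p.2 + W p.
Proof.
case: p => y x W_kernel; rewrite /sigmaHat /= (W_kernel _ (stail x)) subrK.
by congr (A _ + W (_, _)); apply/funext => -[].
Qed.

Lemma involution_kernel_sigmaHat_swap (R : realType) (M : pointedType) (d : M -> M -> R)
    (A : OmegaP d -> R) (W : OmegaHat d -> R) (Am : OmegaM d -> R) (p : OmegaHat d) :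
  involution_kernel A W Am ->
  A (sigmaHat p).1 + W ((sigmaHat p).2, (sigmaHat p).1) = Am p.2 + W (p.2, p.1).
Proof. by case: p => y x W_kernel; rewrite /sigmaHat /= (W_kernel x y) subrK. Qed.

Theorem mainTheorem13 (R : realType) (M : pointedType) (d : M -> M -> R)
  (d_metric : is_metric d) (M_compact : seq_compact d)
  (A : OmegaP d -> R) (A_lip : dlipschitz (seqdist d) A)
  (W : OmegaHat d -> R) (W_lip : dlipschitz (hatdist (d:=d)) W)
  (Am : OmegaM d -> R) (W_kernel : involution_kernel A W Am)
  (mu : probability (OmegaP d) R) (mu_eq : equilibrium mu)
  (muh : probability (OmegaHat d) R) (muh_inv : hat_invariant muh)
  (muh_marg : marginalP muh mu)
  (mum : probability (OmegaM d) R) (mum_marg : marginalM muh mum) :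
  (\int[mu]_x (A x)%:E = \int[mum]_y (Am y)%:E)%E /\
  (\int[mu]_x (Am (thetaInv x))%:E = \int[mum]_y (A (theta y))%:E)%E.
Proof.
have [D d_le] := d_bounded d_metric M_compact.
have Am_lip := dlipschitz_involution_kernel d_metric d_le A_lip W_lip W_kernel.
split.
- rewrite (integral_marginalP d_metric d_le muh_marg A_lip).
  rewrite (integral_marginalM d_metric d_le mum_marg Am_lip).
  apply/esym/(integral_sigmaHat_cohomologous d_metric M_compact d_le muh_inv
    (dlipschitz_fst d_metric d_le Am_lip) (dlipschitz_snd d_metric d_le A_lip) W_lip).
  by move=> p; exact: involution_kernel_sigmaHat.
- rewrite (integral_marginalP d_metric d_le muh_marg Am_lip).
  rewrite (integral_marginalM d_metric d_le mum_marg A_lip).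
  apply/esym/(integral_sigmaHat_cohomologous d_metric M_compact d_le muh_inv
    (dlipschitz_fst d_metric d_le A_lip) (dlipschitz_snd d_metric d_le Am_lip)
    (dlipschitz_swap d_metric d_le W_lip)).
  by move=> p; exact: involution_kernel_sigmaHat_swap.
Qed.
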